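(* Let $\mathbb{A}$ be a 2-category and $p$ a 1-cell of $\mathbb{A}$. Then $p$ is an effective faithful morphism of $\mathbb{A}$ if and only if the 1-cell corresponding to $p$ in $\mathbb{A}^{\mathrm{co}}$ is an effective faithful morphism of $\mathbb{A}^{\mathrm{co}}$.
   Context: A 2-category is a $\mathbf{Cat}$-enriched category; composition of 1-cells is juxtaposition, vertical composition of 2-cells is $\cdot$, horizontal composition is $\ast$, $\mathrm{id}_f$ is the identity 2-cell on $f$. $\mathbb{A}^{\mathrm{co}}$ is the 2-category obtained from $\mathbb{A}$ by reversing the direction of the 2-cells. A 1-cell $f$ is an equivalence if there is $g$ with invertible 2-cells $gf\cong\mathrm{id}$, $\mathrm{id}\cong fg$. For $p:e\to b$: an opcomma object of $p$ along itself is $b\uparrow_p b$ with $\delta^0,\delta^1:b\to b\uparrow_pb$ and $\alpha:\delta^1p\Rightarrow\delta^0p$ such that for every $y$, $h\mapsto(h\delta^0,h\delta^1,\mathrm{id}_h\ast\alpha)$, $\xi\mapsto(\xi\ast\mathrm{id}_{\delta^0},\xi\ast\mathrm{id}_{\delta^1})$ is an isomorphism from $\mathbb{A}(b\uparrow_pb,y)$ onto the category of triples $(h_0,h_1:b\to y,\beta:h_1p\Rightarrow h_0p)$ with morphisms pairs $(\xi_0,\xi_1)$ with $(\xi_0\ast\mathrm{id}_p)\cdot\beta=\beta'\cdot(\xi_1\ast\mathrm{id}_p)$. A two-dimensional pushout of a span $f_0:c\to c_0$, $f_1:c\to c_1$ is $P$ with $q_0,q_1$, $q_0f_0=q_1f_1$,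 such that $k\mapsto(kq_0,kq_1)$ is an isomorphism from $\mathbb{A}(P,y)$ onto the category of pairs $(k_0,k_1)$ with $k_0f_0=k_1f_1$ and morphisms pairs of 2-cells $(\xi_0,\xi_1)$ with $\xi_0\ast\mathrm{id}_{f_0}=\xi_1\ast\mathrm{id}_{f_1}$. $\mathbb{A}$ has the two-dimensional cokernel diagram of $p$ if it has $b\uparrow_pb$ and a two-dimensional pushout $b\uparrow_pb\uparrow_pb$ of $(\delta^0,\delta^1)$ with $D^0,D^2$, $D^2\delta^0=D^0\delta^1$; $D^1$ is the unique 1-cell with $D^1\delta^1=D^2\delta^1$, $D^1\delta^0=D^0\delta^0$, $\mathrm{id}_{D^1}\ast\alpha=(\mathrm{id}_{D^0}\ast\alpha)\cdot(\mathrm{id}_{D^2}\ast\alpha)$; $s^0$ is the unique 1-cell with $s^0\delta^0=s^0\delta^1=\mathrm{id}_b$, $\mathrm{id}_{s^0}\ast\alpha=\mathrm{id}_p$. $\mathrm{Desc}_p(y)$ has objects $(h:y\to b,\beta:\delta^1h\Rightarrow\delta^0h)$ with $(\mathrm{id}_{D^0}\ast\beta)\cdot(\mathrm{id}_{D^2}\ast\beta)=\mathrm{id}_{D^1}\ast\beta$, $\mathrm{id}_{s^0}\ast\beta=\mathrm{id}_h$, morphisms 2-cells $\xi:h_1\Rightarrow h_0$ with $\beta_0\cdot(\mathrm{id}_{\delta^1}\ast\xi)=(\mathrm{id}_{\delta^0}\ast\xi)\cdot\beta_1$. A lax descent object of the two-dimensional cokernel diagram of $p$ is $L$ with $d:L\to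 b$, $\Psi:\delta^1d\Rightarrow\delta^0d$ such that $g\mapsto(dg,\Psi\ast\mathrm{id}_g)$, $\xi\mapsto\mathrm{id}_d\ast\xi$ is an isomorphism $\mathbb{A}(y,L)\cong\mathrm{Desc}_p(y)$ for all $y$; $p^H:e\to L$ is the unique 1-cell with $dp^H=p$ and $\Psi\ast\mathrm{id}_{p^H}=\alpha$. $p$ is an effective faithful morphism of $\mathbb{A}$ if $\mathbb{A}$ has the two-dimensional cokernel diagram of $p$, has a lax descent object $L$ of it, and $p^H:e\to L$ is an equivalence. *)

(** Equality of 2-cells whose boundary 1-cells are equal only propositionally:
    [eqc C x y] holds when the boundaries of [x] and [y] coincide and [x],
    transported along these equalities, is [y]. *)
Definition eqc {X : Type} (C : X -> X -> Type) {f g f' g' : X}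
  (x : C f g) (y : C f' g') : Prop :=
  exists (e1 : f = f') (e2 : g = g'),
    match e2 in _ = k return C f' k with
    | eq_refl => match e1 in _ = k return C k g with eq_refl => x end
    end = y.
Arguments eqc {X} C {f g f' g'} x y.

Lemma eqc_flip {X : Type} (C : X -> X -> Type) {f g f' g' : X}
  (x : C f g) (y : C f' g') :
  eqc C x y -> eqc (fun u v => C v u) x y.
Proof.
  intros [e1 [e2 H]]. destruct e1, e2. simpl in H. subst.
  exists eq_refl, eq_refl. reflexivity.
Qed.
Arguments eqc_flip {X C f g f' g' x y} _.

(** Data of a 2-category.  [comp1 g f] is the juxtaposition [g f];
    [vcomp y x] is [y · x] (first [x], then [y]);
    [hcomp y x : cell (g f) (g' f')] for [y : cell g g'], [x : cell f f']. *)
Record TwoCatData : Type := {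
  ob : Type;
  hom : ob -> ob -> Type;
  cell : forall a b : ob, hom a b -> hom a b -> Type;
  id1 : forall a : ob, hom a a;
  comp1 : forall a b c : ob, hom b c -> hom a b -> hom a c;
  id2 : forall (a b : ob) (f : hom a b), cell a b f f;
  vcomp : forall (a b : ob) (f g h : hom a b), cell a b g h -> cell a b f g -> cell a b f h;
  hcomp : forall (a b c : ob) (g g' : hom b c) (f f' : hom a b),
      cell b c g g' -> cell a b f f' -> cell a c (comp1 a b c g f) (comp1 a b c g' f')
}.

Arguments hom {_} _ _.
Arguments cell {_ _ _} _ _.
Arguments id1 {_} _.
Arguments comp1 {_ _ _ _} _ _.
Arguments id2 {_ _ _} _.
Arguments vcomp {_ _ _ _ _ _} _ _.
Arguments hcomp {_ _ _ _ _ _ _ _} _ _.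

Definition ceq {A : TwoCatData} {a b : ob A} {f g f' g' : hom a b}
  (x : cell f g) (y : cell f' g') : Prop := eqc (@cell A a b) x y.

Record TwoCatAxioms (A : TwoCatData) : Prop := {
  comp1_assoc : forall (a b c d : ob A) (h : hom c d) (g : hom b c) (f : hom a b),
      comp1 h (comp1 g f) = comp1 (comp1 h g) f;
  comp1_idl : forall (a b : ob A) (f : hom a b), comp1 (id1 b) f = f;
  comp1_idr : forall (a b : ob A) (f : hom a b), comp1 f (id1 a) = f;
  vcomp_assoc : forall (a b : ob A) (f g h k : hom a b)
      (z : cell h k) (y : cell g h) (x : cell f g),
      vcomp z (vcomp y x) = vcomp (vcomp z y) x;
  vcomp_idl : forall (a b : ob A) (f g : hom a b) (x : cell f g), vcomp (id2 g) x = x;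
  vcomp_idr : forall (a b : ob A) (f g : hom a b) (x : cell f g), vcomp x (id2 f) = x;
  hcomp_id2 : forall (a b c : ob A) (g : hom b c) (f : hom a b),
      hcomp (id2 g) (id2 f) = id2 (comp1 g f);
  interchange : forall (a b c : ob A) (g g' g'' : hom b c) (f f' f'' : hom a b)
      (y' : cell g' g'') (y : cell g g') (x' : cell f' f'') (x : cell f f'),
      hcomp (vcomp y' y) (vcomp x' x) = vcomp (hcomp y' x') (hcomp y x);
  hcomp_assoc : forall (a b c d : ob A) (h h' : hom c d) (g g' : hom b c) (f f' : hom a b)
      (z : cell h h') (y : cell g g') (x : cell f f'),
      ceq (hcomp z (hcomp y x)) (hcomp (hcomp z y) x);
  hcomp_idl : forall (a b : ob A) (f f' : hom a b) (x : cell f f'),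
      ceq (hcomp (id2 (id1 b)) x) x;
  hcomp_idr : forall (a b : ob A) (f f' : hom a b) (x : cell f f'),
      ceq (hcomp x (id2 (id1 a))) x
}.

Record TwoCat : Type := {
  tc_data :> TwoCatData;
  tc_ax : TwoCatAxioms tc_data
}.

Definition co_data (A : TwoCatData) : TwoCatData := {|
  ob := ob A;
  hom := @hom A;
  cell := fun a b f g => @cell A a b g f;
  id1 := @id1 A;
  comp1 := @comp1 A;
  id2 := @id2 A;
  vcomp := fun a b f g h (y : @cell A a b h g) (x : @cell A a b g f) => vcomp x y;
  hcomp := fun a b c g g' f f' (y : @cell A b c g' g) (x : @cell A a b f' f) => hcomp y x
|}.

Lemma co_axioms (A : TwoCat) : TwoCatAxioms (co_data A).
Proof.
  destruct A as [A HA]; destruct HA; split; simpl; intros.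
  - apply comp1_assoc0.
  - apply comp1_idl0.
  - apply comp1_idr0.
  - symmetry; apply vcomp_assoc0.
  - apply vcomp_idr0.
  - apply vcomp_idl0.
  - apply hcomp_id3.
  - apply interchange0.
  - exact (eqc_flip (hcomp_assoc0 _ _ _ _ _ _ _ _ _ _ z y x)).
  - exact (eqc_flip (hcomp_idl0 _ _ _ _ x)).
  - exact (eqc_flip (hcomp_idr0 _ _ _ _ x)).
Qed.

Definition co (A : TwoCat) : TwoCat := {| tc_data := co_data A; tc_ax := co_axioms A |}.

Section Notions.
Variable A : TwoCatData.

(** [z = x · y], where the boundaries of [x], [y], [z] only agree up to
    (propositional) equality of 1-cells. *)
Definition ceq_vcomp {a b : ob A} {f1 g1 f2 g2 f3 g3 : hom a b}
  (z : cell f3 g3) (x : cell f1 g1) (y : cell f2 g2) : Prop :=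
  exists (f g h : hom a b) (x' : cell g h) (y' : cell f g),
    ceq x x' /\ ceq y y' /\ ceq z (vcomp x' y').

Definition invertible {a b : ob A} {f g : hom a b} (x : cell f g) : Prop :=
  exists y : cell g f, vcomp y x = id2 f /\ vcomp x y = id2 g.

Definition is_equivalence {a b : ob A} (f : hom a b) : Prop :=
  exists g : hom b a,
    (exists x : cell (comp1 g f) (id1 a), invertible x) /\
    (exists y : cell (id1 b) (comp1 f g), invertible y).

Definition is_opcomma {e b : ob A} (p : hom e b) (O : ob A) (d0 d1 : hom b O)
  (al : cell (comp1 d1 p) (comp1 d0 p)) : Prop :=
  (forall (y : ob A) (h0 h1 : hom b y) (be : cell (comp1 h1 p) (comp1 h0 p)),
     exists! h : hom O y,
       comp1 h d0 = h0 /\ comp1 h d1 = h1 /\ ceq (hcomp (id2 h) al) be)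
  /\
  (forall (y : ob A) (h h' : hom O y) (h0 h1 h0' h1' : hom b y)
     (be : cell (comp1 h1 p) (comp1 h0 p)) (be' : cell (comp1 h1' p) (comp1 h0' p)),
     comp1 h d0 = h0 -> comp1 h d1 = h1 -> ceq (hcomp (id2 h) al) be ->
     comp1 h' d0 = h0' -> comp1 h' d1 = h1' -> ceq (hcomp (id2 h') al) be' ->
     forall (x0 : cell h0 h0') (x1 : cell h1 h1'),
       vcomp (hcomp x0 (id2 p)) be = vcomp be' (hcomp x1 (id2 p)) ->
       exists! x : cell h h',
         ceq (hcomp x (id2 d0)) x0 /\ ceq (hcomp x (id2 d1)) x1).

Definition is_pushout {c c0 c1 : ob A} (f0 : hom c c0) (f1 : hom c c1)
  (P : ob A) (q0 : hom c0 P) (q1 : hom c1 P) : Prop :=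
  comp1 q0 f0 = comp1 q1 f1
  /\
  (forall (y : ob A) (k0 : hom c0 y) (k1 : hom c1 y),
     comp1 k0 f0 = comp1 k1 f1 ->
     exists! k : hom P y, comp1 k q0 = k0 /\ comp1 k q1 = k1)
  /\
  (forall (y : ob A) (k k' : hom P y)
     (x0 : cell (comp1 k q0) (comp1 k' q0)) (x1 : cell (comp1 k q1) (comp1 k' q1)),
     ceq (hcomp x0 (id2 f0)) (hcomp x1 (id2 f1)) ->
     exists! x : cell k k', hcomp x (id2 q0) = x0 /\ hcomp x (id2 q1) = x1).

Variables (e b : ob A) (p : hom e b) (O : ob A) (d0 d1 : hom b O)
  (al : cell (comp1 d1 p) (comp1 d0 p)) (P : ob A) (D0 D2 : hom O P).

Definition is_D1 (D1 : hom O P) : Prop :=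
  comp1 D1 d1 = comp1 D2 d1 /\ comp1 D1 d0 = comp1 D0 d0 /\
  ceq_vcomp (hcomp (id2 D1) al) (hcomp (id2 D0) al) (hcomp (id2 D2) al).

Definition is_s0 (s0 : hom O b) : Prop :=
  comp1 s0 d0 = id1 b /\ comp1 s0 d1 = id1 b /\ ceq (hcomp (id2 s0) al) (id2 p).

Variables (D1 : hom O P) (s0 : hom O b).

Definition is_desc {y : ob A} (h : hom y b) (be : cell (comp1 d1 h) (comp1 d0 h)) : Prop :=
  ceq_vcomp (hcomp (id2 D1) be) (hcomp (id2 D0) be) (hcomp (id2 D2) be) /\
  ceq (hcomp (id2 s0) be) (id2 h).

Definition desc_mor {y : ob A} (h1 : hom y b) (be1 : cell (comp1 d1 h1) (comp1 d0 h1))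
  (h0 : hom y b) (be0 : cell (comp1 d1 h0) (comp1 d0 h0)) (x : cell h1 h0) : Prop :=
  vcomp be0 (hcomp (id2 d1) x) = vcomp (hcomp (id2 d0) x) be1.

(** Lax descent object: g ↦ (d g, Ψ * id_g), ξ ↦ id_d * ξ is an isomorphism
    of categories A(y, L) ≅ Desc_p(y) (a functor into Desc_p(y), bijective on
    objects and on hom-sets). *)
Definition is_lax_descent (L : ob A) (d : hom L b)
  (Ps : cell (comp1 d1 d) (comp1 d0 d)) : Prop :=
  (forall (y : ob A) (g : hom y L) (h : hom y b) (be : cell (comp1 d1 h) (comp1 d0 h)),
     comp1 d g = h -> ceq (hcomp Ps (id2 g)) be -> is_desc h be)
  /\
  (forall (y : ob A) (h : hom y b) (be : cell (comp1 d1 h) (comp1 d0 h)),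
     is_desc h be ->
     exists! g : hom y L, comp1 d g = h /\ ceq (hcomp Ps (id2 g)) be)
  /\
  (forall (y : ob A) (g g' : hom y L) (h h' : hom y b)
     (be : cell (comp1 d1 h) (comp1 d0 h)) (be' : cell (comp1 d1 h') (comp1 d0 h')),
     comp1 d g = h -> ceq (hcomp Ps (id2 g)) be ->
     comp1 d g' = h' -> ceq (hcomp Ps (id2 g')) be' ->
     forall z : cell h h', desc_mor h be h' be' z ->
     exists! x : cell g g', ceq (hcomp (id2 d) x) z).

Definition is_pH (L : ob A) (d : hom L b) (Ps : cell (comp1 d1 d) (comp1 d0 d))
  (pH : hom e L) : Prop :=
  comp1 d pH = p /\ ceq (hcomp Ps (id2 pH)) al.

End Notions.

Arguments is_opcomma {A e b} p O d0 d1 al.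
Arguments is_pushout {A c c0 c1} f0 f1 P q0 q1.
Arguments is_D1 {A e b} p {O} d0 d1 al {P} D0 D2 D1.
Arguments is_s0 {A e b} p {O} d0 d1 al s0.
Arguments is_lax_descent {A b O} d0 d1 {P} D0 D2 D1 s0 L d Ps.
Arguments is_pH {A e b} p {O} d0 d1 al L d Ps pH.
Arguments is_equivalence {A a b} f.

Definition effective_faithful {A : TwoCatData} {e b : ob A} (p : hom e b) : Prop :=
  exists (O : ob A) (d0 d1 : hom b O) (al : cell (comp1 d1 p) (comp1 d0 p)),
    is_opcomma p O d0 d1 al /\
    exists (P : ob A) (D0 D2 : hom O P),
      is_pushout d0 d1 P D2 D0 /\
      exists (D1 : hom O P) (s0 : hom O b),
        is_D1 p d0 d1 al D0 D2 D1 /\ is_s0 p d0 d1 al s0 /\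
        exists (L : ob A) (d : hom L b) (Ps : cell (comp1 d1 d) (comp1 d0 d)),
          is_lax_descent d0 d1 D0 D2 D1 s0 L d Ps /\
          exists pH : hom e L, is_pH p d0 d1 al L d Ps pH /\ is_equivalence pH.

(* Reversing 2-cells carries each ingredient of the definition to the same
   ingredient in A^co, provided δ^0 and δ^1 (and D^0 and D^2) are exchanged:
   α, Ψ and descent data keep their direction, pushout squares and descent
   morphisms are read backwards, and an equivalence stays an equivalence via
   the inverses of its witnessing 2-cells.  As (A^co)^co is A on the nose,
   one direction of the equivalence suffices. *)

From Stdlib Require Import Setoid.

Lemma unique_exists_iff {X : Type} (P Q : X -> Prop) :
  (forall x, P x <-> Q x) -> (exists! x, P x) -> exists! x, Q x.
Proof.
  intros PQ [x [Px Px_uniq]]. exists x. split.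
  - apply PQ, Px.
  - intros x' Qx'. apply Px_uniq, PQ, Qx'.
Qed.

Section Co.
Variable A : TwoCatData.

Notation Aco := (co_data A).

Lemma ceq_co {a b : ob A} {f g f' g' : hom a b} (x : cell f g) (y : cell f' g') :
  @ceq Aco a b g f g' f' x y <-> ceq x y.
Proof. split; intro xy; exact (eqc_flip xy). Qed.

Lemma ceq_sym {a b : ob A} {f g f' g' : hom a b} (x : cell f g) (y : cell f' g') :
  ceq x y -> ceq y x.
Proof.
  intros [e1 [e2 xy]]. destruct e1, e2. simpl in xy. subst.
  exists eq_refl, eq_refl. reflexivity.
Qed.

Lemma ceq_vcomp_co {a b : ob A} {f1 g1 f2 g2 f3 g3 : hom a b}
  (z : cell f3 g3) (x : cell f1 g1) (y : cell f2 g2) :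
  @ceq_vcomp Aco a b g2 f2 g1 f1 g3 f3 z y x <-> ceq_vcomp A z x y.
Proof.
  split; intros [f [g [h [x' [y' [xx' [yy' zxy]]]]]]];
    exists h, g, f, y', x'; repeat split; apply ceq_co; assumption.
Qed.

Lemma is_opcomma_co {e b : ob A} (p : hom e b) (O : ob A) (d0 d1 : hom b O)
  (al : cell (comp1 d1 p) (comp1 d0 p)) :
  is_opcomma p O d0 d1 al -> @is_opcomma Aco e b p O d1 d0 al.
Proof.
  intros [opcomma_1 opcomma_2]. split.
  - intros y h0 h1 be. refine (unique_exists_iff _ _ _ (opcomma_1 y h1 h0 be)).
    intro h. rewrite ceq_co. tauto.
  - intros y h h' h0 h1 h0' h1' be be' hd1 hd0 hal h'd1 h'd0 h'al x0 x1 x01.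
    apply ceq_co in hal, h'al.
    refine (unique_exists_iff _ _ _
             (opcomma_2 y h' h h1' h0' h1 h0 be' be h'd0 h'd1 h'al hd0 hd1 hal
                x1 x0 (eq_sym x01))).
    intro x. rewrite !ceq_co. tauto.
Qed.

Lemma is_pushout_co {c c0 c1 : ob A} (f0 : hom c c0) (f1 : hom c c1)
  (P : ob A) (q0 : hom c0 P) (q1 : hom c1 P) :
  is_pushout f0 f1 P q0 q1 -> @is_pushout Aco c c1 c0 f1 f0 P q1 q0.
Proof.
  intros [square [pushout_1 pushout_2]]. split; [|split].
  - exact (eq_sym square).
  - intros y k0 k1 k01. refine (unique_exists_iff _ _ _ (pushout_1 y k1 k0 (eq_sym k01))).
    tauto.
  - intros y k k' x0 x1 x01. apply ceq_co, ceq_sym in x01.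
    refine (unique_exists_iff _ _ _ (pushout_2 y k' k x1 x0 x01)). tauto.
Qed.

Lemma invertible_inverse_co {a b : ob A} {f g : hom a b} :
  (exists x : cell f g, invertible A x) -> exists x : @cell Aco a b f g, invertible Aco x.
Proof. intros [x [y [yx xy]]]. exists y, x. split; assumption. Qed.

Lemma is_equivalence_co {a b : ob A} (f : hom a b) :
  is_equivalence f -> @is_equivalence Aco a b f.
Proof.
  intros [g [gf fg]]. exists g. split; apply invertible_inverse_co; assumption.
Qed.

Section Cokernel.
Variables (e b : ob A) (p : hom e b) (O : ob A) (d0 d1 : hom b O)
  (al : cell (comp1 d1 p) (comp1 d0 p)) (P : ob A) (D0 D2 : hom O P)
  (D1 : hom O P) (s0 : hom O b).

Lemma is_D1_co : is_D1 p d0 d1 al D0 D2 D1 -> @is_D1 Aco e b p O d1 d0 al P D2 D0 D1.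
Proof. intros [D1d1 [D1d0 D1al]]. repeat split; auto. apply ceq_vcomp_co, D1al. Qed.

Lemma is_s0_co : is_s0 p d0 d1 al s0 -> @is_s0 Aco e b p O d1 d0 al s0.
Proof. intros [s0d0 [s0d1 s0al]]. repeat split; auto. apply ceq_co, s0al. Qed.

Lemma is_desc_co {y : ob A} (h : hom y b) (be : cell (comp1 d1 h) (comp1 d0 h)) :
  @is_desc Aco b O d1 d0 P D2 D0 D1 s0 y h be <-> is_desc A b O d0 d1 P D0 D2 D1 s0 h be.
Proof. unfold is_desc. rewrite ceq_vcomp_co, ceq_co. reflexivity. Qed.

Lemma desc_mor_co {y : ob A} (h1 : hom y b) (be1 : cell (comp1 d1 h1) (comp1 d0 h1))
  (h0 : hom y b) (be0 : cell (comp1 d1 h0) (comp1 d0 h0)) (x : cell h0 h1) :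
  @desc_mor Aco b O d1 d0 y h1 be1 h0 be0 x <-> desc_mor A b O d0 d1 h0 be0 h1 be1 x.
Proof. split; intro square; symmetry; exact square. Qed.

Lemma is_lax_descent_co (L : ob A) (d : hom L b) (Ps : cell (comp1 d1 d) (comp1 d0 d)) :
  is_lax_descent d0 d1 D0 D2 D1 s0 L d Ps -> @is_lax_descent Aco b O d1 d0 P D2 D0 D1 s0 L d Ps.
Proof.
  intros [descent_1 [descent_2 descent_3]]. split; [|split].
  - intros y g h be dg Psg. apply is_desc_co, (descent_1 y g h be dg), ceq_co, Psg.
  - intros y h be hbe. apply is_desc_co in hbe.
    refine (unique_exists_iff _ _ _ (descent_2 y h be hbe)).
    intro g. rewrite ceq_co. reflexivity.
  - intros y g g' h h' be be' dg Psg dg' Psg' z z_mor.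
    apply ceq_co in Psg, Psg'. apply desc_mor_co in z_mor.
    refine (unique_exists_iff _ _ _ (descent_3 y g' g h' h be' be dg' Psg' dg Psg z z_mor)).
    intro x. rewrite ceq_co. reflexivity.
Qed.

Lemma is_pH_co (L : ob A) (d : hom L b) (Ps : cell (comp1 d1 d) (comp1 d0 d)) (pH : hom e L) :
  is_pH p d0 d1 al L d Ps pH -> @is_pH Aco e b p O d1 d0 al L d Ps pH.
Proof. intros [dpH PspH]. split; [exact dpH | apply ceq_co, PspH]. Qed.

End Cokernel.

Lemma effective_faithful_co {e b : ob A} (p : hom e b) :
  effective_faithful p -> @effective_faithful Aco e b p.
Proof.
  intros [O [d0 [d1 [al [opcomma [P [D0 [D2 [pushout [D1 [s0 [D1_spec [s0_spec
           [L [d [Ps [descent [pH [pH_spec pH_equiv]]]]]]]]]]]]]]]]]]].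
  exists O, d1, d0, al. split; [apply is_opcomma_co, opcomma |].
  exists P, D2, D0. split; [apply is_pushout_co, pushout |].
  exists D1, s0. split; [apply is_D1_co, D1_spec |].
  split; [apply is_s0_co, s0_spec |].
  exists L, d, Ps. split; [apply is_lax_descent_co, descent |].
  exists pH. split; [apply is_pH_co, pH_spec | apply is_equivalence_co, pH_equiv].
Qed.

End Co.

Theorem lemma5p6 (A : TwoCat) (e b : ob A) (p : hom e b) :
  effective_faithful p <-> @effective_faithful (co A) e b p.
Proof.
  split.
  - apply effective_faithful_co.
  - exact (effective_faithful_co (co_data A) p).
Qed.
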